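(* Let $A, B \subseteq \omega$ be infinite. Then there is a single enumeration functional $\Psi$ with $\Psi(C) = A$ for every infinite $C \subseteq B$ if and only if there is a single relative c.e. operator $\Theta$ with $\Theta(C) = A$ for every infinite $C\subseteq B$.
   Context: An enumeration functional is a c.e. set $\Psi$ of pairs $(E,F)$ of finite subsets of $\omega$, with $\Psi(X) = \bigcup\{F : \exists E\subseteq X\ (E,F)\in\Psi\}$ (it uses only positive information about $X$). A relative c.e. operator is a c.e. set $\Theta$ of pairs $(\sigma,x)\in 2^{<\omega}\times\omega$, with $\Theta(X)$ the set of $x$ such that $(\sigma,x)\in\Theta$ for some initial segment $\sigma$ of the characteristic function of $X$ (it may use both positive and negative information). *)

From Stdlib Require Import Arith List.
Import ListNotations.

(** Syntax of partial recursive function codes. Arity is not enforced; the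
    argument is a list of naturals. *)
Inductive prf : Type :=
| PZero : prf
| PSucc : prf
| PProj : nat -> prf
| PComp : prf -> list prf -> prf
| PPrec : prf -> prf -> prf
| PMu   : prf -> prf.

Inductive eval : prf -> list nat -> nat -> Prop :=
| ev_zero v : eval PZero v 0
| ev_succ x v : eval PSucc (x :: v) (S x)
| ev_proj i v : i < length v -> eval (PProj i) v (nth i v 0)
| ev_comp f gs v ws y : evals gs v ws -> eval f ws y -> eval (PComp f gs) v y
| ev_prec0 f g v y : eval f v y -> eval (PPrec f g) (0 :: v) y
| ev_precS f g n v y z :
    eval (PPrec f g) (n :: v) y -> eval g (n :: y :: v) z ->
    eval (PPrec f g) (S n :: v) z
| ev_mu f v y :
    eval f (y :: v) 0 ->
    (forall z, z < y -> exists k, eval f (z :: v) (S k)) ->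
    eval (PMu f) v y
with evals : list prf -> list nat -> list nat -> Prop :=
| evs_nil v : evals [] v []
| evs_cons g gs v w ws : eval g v w -> evals gs v ws -> evals (g :: gs) v (w :: ws).

Definition ce2 (R : nat -> nat -> Prop) : Prop :=
  exists c : prf, forall a b, R a b <-> exists y, eval c [a; b] y.

Definition infinite (X : nat -> Prop) : Prop :=
  forall n, exists m, n <= m /\ X m.

(** Canonical index of finite sets: e codes D_e = { i | bit i of e is 1 }. *)
Definition canon (e : nat) (i : nat) : Prop := Nat.testbit e i = true.

(** Enumeration functional: a c.e. set Psi of pairs (E,F) of finite sets,
    given via canonical indices (e,f).
    Psi(X) = union of F over (E,F) in Psi with E subset of X. *)
Definition enum_apply (Psi : nat -> nat -> Prop) (X : nat -> Prop) (x : nat) : Prop :=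
  exists e f, Psi e f /\ (forall i, canon e i -> X i) /\ canon f x.

(** Binary strings are coded by positive naturals: n >= 1 with binary
    expansion 1 b_{l-1} ... b_0 codes the string sigma = b_0 b_1 ... b_{l-1}
    of length l = log2 n (so sigma(i) = bit i of n for i < l).
    [init_seg n X] : n codes an initial segment of the characteristic
    function of X. *)
Definition init_seg (n : nat) (X : nat -> Prop) : Prop :=
  0 < n /\ forall i, i < Nat.log2 n -> (Nat.testbit n i = true <-> X i).

Definition rel_apply (Theta : nat -> nat -> Prop) (X : nat -> Prop) (x : nat) : Prop :=
  exists n, Theta n x /\ init_seg n X.

From Stdlib Require Import Arith Lia List Classical.
Import ListNotations.

(* An enumeration functional Psi is already a relative operator: accept a string
   sigma and x when some (E, F) in Psi has E inside the ones of sigma and x in F;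
   this computes Psi(X) for every X.  Conversely, from Theta take the pairs
   (ones of sigma, {x}) with (sigma, x) in Theta.  If Theta(C) = A for all infinite
   C contained in B, this functional also gives A on those C: a string whose ones
   lie in C can be continued by the elements of B beyond its length to an
   infinite subset of B, on which Theta still yields A.  Both constructions are
   c.e. because c.e. relations are closed under conjunction with recursive
   predicates and under existential projection; projection is obtained by
   dovetailing with an evaluator whose minimisations are cut off after s
   candidates, which is itself primitive recursive in s. *)

(** * Partial recursive functions *)

Fixpoint prf_nested_ind (P : prf -> Prop)
  (H0 : P PZero) (H1 : P PSucc) (H2 : forall i, P (PProj i))
  (H3 : forall f gs, P f -> Forall P gs -> P (PComp f gs))
  (H4 : forall f g, P f -> P g -> P (PPrec f g))
  (H5 : forall f, P f -> P (PMu f)) (c : prf) {struct c} : P c :=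
  match c with
  | PZero => H0
  | PSucc => H1
  | PProj i => H2 i
  | PComp f gs =>
      H3 f gs (prf_nested_ind P H0 H1 H2 H3 H4 H5 f)
        ((fix all (l : list prf) : Forall P l :=
            match l with
            | [] => Forall_nil _
            | g :: l' => Forall_cons _ (prf_nested_ind P H0 H1 H2 H3 H4 H5 g) (all l')
            end) gs)
  | PPrec f g =>
      H4 f g (prf_nested_ind P H0 H1 H2 H3 H4 H5 f) (prf_nested_ind P H0 H1 H2 H3 H4 H5 g)
  | PMu f => H5 f (prf_nested_ind P H0 H1 H2 H3 H4 H5 f)
  end.

Lemma evals_det_of gs :
  Forall (fun g => forall v y y', eval g v y -> eval g v y' -> y = y') gs ->
  forall v ws ws', evals gs v ws -> evals gs v ws' -> ws = ws'.
Proof.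
  induction 1 as [|g gs Hg _ IH]; intros v ws ws' E E'.
  - inversion E; inversion E'; reflexivity.
  - inversion E; inversion E'; subst. f_equal; eauto.
Qed.

Lemma eval_det c v y y' : eval c v y -> eval c v y' -> y = y'.
Proof.
  revert v y y'.
  induction c as [| |i|f gs IHf IHgs|f g IHf IHg|f IHf] using prf_nested_ind;
    intros v y y' H H'.
  - inversion H; inversion H'; subst; reflexivity.
  - inversion H; inversion H'; subst; congruence.
  - inversion H; inversion H'; subst; congruence.
  - inversion H as [| | |? ? ? ws ? E F| | | ]; subst.
    inversion H' as [| | |? ? ? ws' ? E' F'| | | ]; subst.
    rewrite (evals_det_of gs IHgs v ws ws' E E') in F. eauto.
  - destruct v as [|n v]; [inversion H|].
    revert y y' H H'. induction n as [|n IHn]; intros y y' H H'.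
    + inversion H; inversion H'; subst; eauto.
    + inversion H as [| | | | |? ? ? ? a ? Ha Ga|]; subst.
      inversion H' as [| | | | |? ? ? ? b ? Hb Gb|]; subst.
      rewrite (IHn a b Ha Hb) in Ga. eauto.
  - inversion H as [| | | | | |? ? ? Hy Hlt]; subst.
    inversion H' as [| | | | | |? ? ? Hy' Hlt']; subst.
    destruct (lt_eq_lt_dec y y') as [[Hl|]|Hl]; auto.
    + destruct (Hlt' _ Hl) as [k Hk]. discriminate (IHf _ _ _ Hy Hk).
    + destruct (Hlt _ Hl) as [k Hk]. discriminate (IHf _ _ _ Hy' Hk).
Qed.

Lemma evals_det gs v ws ws' : evals gs v ws -> evals gs v ws' -> ws = ws'.
Proof.
  apply evals_det_of, Forall_forall. intros g _ w y y'. apply eval_det.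
Qed.

(** * Total computable functions *)

Definition computable (m : nat) (F : list nat -> nat) : Prop :=
  exists c, forall v, length v = m -> eval c v (F v).

Lemma computable_ext m F G :
  computable m F -> (forall v, length v = m -> F v = G v) -> computable m G.
Proof. intros [c Hc] E. exists c. intros v Hv. rewrite <- E by exact Hv. auto. Qed.

Fixpoint const_code (k : nat) : prf :=
  match k with 0 => PZero | S k => PComp PSucc [const_code k] end.

Lemma computable_const m k : computable m (fun _ => k).
Proof.
  exists (const_code k). intros v _. induction k as [|k IH]; simpl.
  - constructor.
  - econstructor; [constructor; [exact IH|constructor]|constructor].
Qed.

Lemma computable_proj m i : i < m -> computable m (fun v => nth i v 0).
Proof. intros Hi. exists (PProj i). intros v Hv. constructor. lia. Qed.

Lemma computable_codes m Gs : Forall (computable m) Gs ->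
  exists cs, forall v, length v = m -> evals cs v (map (fun G => G v) Gs).
Proof.
  induction 1 as [|G Gs [c Hc] _ [cs Hcs]].
  - exists []. constructor.
  - exists (c :: cs). constructor; auto.
Qed.

Lemma computable_comp m F Gs :
  computable (length Gs) F -> Forall (computable m) Gs ->
  computable m (fun v => F (map (fun G => G v) Gs)).
Proof.
  intros [cf Hf] HG. destruct (computable_codes _ _ HG) as [cs Hcs].
  exists (PComp cf cs). intros v Hv. econstructor; [auto|]. apply Hf. apply length_map.
Qed.

Lemma map_nth_seq v k n : length v = k + n ->
  map (fun i => nth i v 0) (seq k n) = skipn k v.
Proof.
  revert k n. induction v as [|a v IH]; intros k n Hl; simpl in Hl.
  - destruct k, n; simpl in *; congruence.
  - destruct k as [|k].
    + destruct n as [|n]; [lia|]. simpl. f_equal.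
      rewrite <- seq_shift, map_map. apply (IH 0). lia.
    + simpl. rewrite <- seq_shift, map_map. apply IH. lia.
Qed.

Lemma computable_comp_skipn k m F Gs :
  computable (length Gs + m) F -> Forall (computable (k + m)) Gs ->
  computable (k + m) (fun w => F (map (fun G => G w) Gs ++ skipn k w)).
Proof.
  intros HF HG.
  apply computable_ext with
    (fun w => F (map (fun G => G w) (Gs ++ map (fun i w => nth i w 0) (seq k m)))).
  - apply computable_comp.
    + rewrite length_app, length_map, length_seq. exact HF.
    + apply Forall_app. split; [exact HG|].
      apply Forall_forall. intros G HG'. apply in_map_iff in HG' as [i [<- Hi]].
      apply in_seq in Hi. apply computable_proj. lia.
  - intros w Hw. rewrite map_app, map_map, map_nth_seq by exact Hw. reflexivity.
Qed.

Lemma computable_prec m F G :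
  computable m F -> computable (S (S m)) G ->
  computable (S m) (fun w => nat_rect (fun _ => nat) (F (tl w))
                               (fun k y => G (k :: y :: tl w)) (hd 0 w)).
Proof.
  intros [cf Hf] [cg Hg]. exists (PPrec cf cg). intros [|n v] Hv; simpl in Hv; [lia|].
  simpl. induction n as [|n IH]; simpl.
  - constructor. apply Hf. lia.
  - econstructor; [exact IH|]. apply Hg. simpl. lia.
Qed.

Lemma computable_rec m (h : nat -> list nat -> nat) F G X :
  computable m F -> computable (S (S m)) G ->
  (forall v, length v = m -> h 0 v = F v) ->
  (forall k v, length v = m -> h (S k) v = G (k :: h k v :: v)) ->
  computable m X -> computable m (fun v => h (X v) v).
Proof.
  intros HF HG E0 ES HX.
  eapply computable_ext.
  - apply (computable_comp_skipn 0 m _ [X] (computable_prec _ _ _ HF HG)).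
    constructor; [exact HX|constructor].
  - intros v Hv. simpl. induction (X v) as [|n IH]; simpl.
    + symmetry. apply E0, Hv.
    + rewrite IH, ES by exact Hv. reflexivity.
Qed.

Lemma computable_app1 (f : nat -> nat) m X :
  computable 1 (fun v => f (nth 0 v 0)) -> computable m X -> computable m (fun v => f (X v)).
Proof. intros Hf HX. apply (computable_comp m _ [X] Hf). repeat constructor. exact HX. Qed.

Lemma computable_app2 (f : nat -> nat -> nat) m X Y :
  computable 2 (fun v => f (nth 0 v 0) (nth 1 v 0)) -> computable m X -> computable m Y ->
  computable m (fun v => f (X v) (Y v)).
Proof. intros Hf HX HY. apply (computable_comp m _ [X; Y] Hf). repeat constructor; assumption. Qed.

Lemma computable_succ m X : computable m X -> computable m (fun v => S (X v)).
Proof.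
  apply computable_app1. exists PSucc. intros [|x [|]] H; simpl in H; try lia. constructor.
Qed.

Lemma computable_pred m X : computable m X -> computable m (fun v => pred (X v)).
Proof.
  apply computable_app1.
  apply (computable_rec 1 (fun k _ => pred k) (fun _ => 0) (fun w => nth 0 w 0));
    try apply computable_proj; try apply computable_const; reflexivity || lia.
Qed.

Lemma computable_add m X Y : computable m X -> computable m Y -> computable m (fun v => X v + Y v).
Proof.
  apply computable_app2.
  apply (computable_rec 2 (fun k v => k + nth 1 v 0) (fun v => nth 1 v 0) (fun w => S (nth 1 w 0)));
    try apply computable_succ; try apply computable_proj; reflexivity || lia.
Qed.

Lemma computable_mul m X Y : computable m X -> computable m Y -> computable m (fun v => X v * Y v).
Proof.
  apply computable_app2.
  apply (computable_rec 2 (fun k v => k * nth 1 v 0) (fun _ => 0) (fun w => nth 3 w 0 + nth 1 w 0)).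
  - apply computable_const.
  - apply computable_add; apply computable_proj; lia.
  - reflexivity.
  - intros k v _. simpl. lia.
  - apply computable_proj; lia.
Qed.

Lemma computable_sub m X Y : computable m X -> computable m Y -> computable m (fun v => X v - Y v).
Proof.
  apply computable_app2.
  apply (computable_rec 2 (fun k v => nth 0 v 0 - k) (fun v => nth 0 v 0) (fun w => pred (nth 1 w 0))
           (fun v => nth 1 v 0)).
  - apply computable_proj; lia.
  - apply computable_pred, computable_proj; lia.
  - intros; lia.
  - intros k v _. simpl. lia.
  - apply computable_proj; lia.
Qed.

Lemma computable_ifz m X Y Z : computable m X -> computable m Y -> computable m Z ->
  computable m (fun v => if X v =? 0 then Y v else Z v).
Proof.
  intros HX HY HZ.
  (* [1 - x] and [1 - (1 - x)] are the indicators of [x = 0] and [x <> 0]. *)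
  apply computable_ext with (fun v => (1 - X v) * Y v + (1 - (1 - X v)) * Z v).
  - apply computable_add; apply computable_mul; try assumption;
      repeat apply computable_sub; try apply computable_const; assumption.
  - intros v _. destruct (X v); simpl; lia.
Qed.

Lemma computable_ifeq m X Y Z W :
  computable m X -> computable m Y -> computable m Z -> computable m W ->
  computable m (fun v => if X v =? Y v then Z v else W v).
Proof.
  intros HX HY HZ HW.
  apply computable_ext with (fun v => if (X v - Y v) + (Y v - X v) =? 0 then Z v else W v).
  - apply computable_ifz; try assumption. apply computable_add; apply computable_sub; assumption.
  - intros v _. destruct (Nat.eqb_spec (X v) (Y v)), (Nat.eqb_spec (X v - Y v + (Y v - X v)) 0);
      reflexivity || lia.
Qed.

Lemma computable_pow2 m X : computable m X -> computable m (fun v => 2 ^ X v).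
Proof.
  apply (computable_app1 (fun a => 2 ^ a)).
  apply (computable_rec 1 (fun k _ => 2 ^ k) (fun _ => 1) (fun w => nth 1 w 0 + nth 1 w 0)).
  - apply computable_const.
  - apply computable_add; apply computable_proj; lia.
  - reflexivity.
  - intros k v _. simpl. lia.
  - apply computable_proj; lia.
Qed.

Lemma b2n_odd_succ k : Nat.b2n (Nat.odd (S k)) = 1 - Nat.b2n (Nat.odd k).
Proof. rewrite Nat.odd_succ, <- Nat.negb_odd. destruct (Nat.odd k); reflexivity. Qed.

Lemma div2_succ k : Nat.div2 (S k) = Nat.div2 k + Nat.b2n (Nat.odd k).
Proof.
  pose proof (Nat.div2_odd k) as E. pose proof (Nat.div2_odd (S k)) as E'.
  rewrite b2n_odd_succ in E'. destruct (Nat.odd k); simpl in *; lia.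
Qed.

Lemma computable_odd m X : computable m X -> computable m (fun v => Nat.b2n (Nat.odd (X v))).
Proof.
  apply (computable_app1 (fun a => Nat.b2n (Nat.odd a))).
  apply (computable_rec 1 (fun k _ => Nat.b2n (Nat.odd k)) (fun _ => 0) (fun w => 1 - nth 1 w 0)).
  - apply computable_const.
  - apply computable_sub; [apply computable_const|apply computable_proj; lia].
  - reflexivity.
  - intros k v _. apply b2n_odd_succ.
  - apply computable_proj; lia.
Qed.

Lemma computable_div2 m X : computable m X -> computable m (fun v => Nat.div2 (X v)).
Proof.
  apply computable_app1.
  apply (computable_rec 1 (fun k _ => Nat.div2 k) (fun _ => 0)
           (fun w => nth 1 w 0 + Nat.b2n (Nat.odd (nth 0 w 0)))).
  - apply computable_const.
  - apply computable_add; [|apply computable_odd]; apply computable_proj; lia.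
  - reflexivity.
  - intros k v _. apply div2_succ.
  - apply computable_proj; lia.
Qed.

Lemma testbit_odd_shiftr a i : Nat.testbit a i = Nat.odd (Nat.shiftr a i).
Proof. rewrite <- Nat.bit0_odd, Nat.shiftr_spec'. reflexivity. Qed.

Lemma computable_testbit m X Y :
  computable m X -> computable m Y -> computable m (fun v => Nat.b2n (Nat.testbit (X v) (Y v))).
Proof.
  apply (computable_app2 (fun a i => Nat.b2n (Nat.testbit a i))).
  apply computable_ext with (fun v => Nat.b2n (Nat.odd (Nat.shiftr (nth 0 v 0) (nth 1 v 0)))).
  - apply computable_odd.
    apply (computable_rec 2 (fun k v => Nat.shiftr (nth 0 v 0) k) (fun v => nth 0 v 0)
             (fun w => Nat.div2 (nth 1 w 0)) (fun v => nth 1 v 0));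
      try apply computable_div2; try apply computable_proj; reflexivity || lia.
  - intros v _. rewrite testbit_odd_shiftr. reflexivity.
Qed.

Fixpoint sum_below (n : nat) (F : nat -> nat) : nat :=
  match n with 0 => 0 | S n => sum_below n F + F n end.

Lemma sum_below_eq_0 n F : sum_below n F = 0 <-> forall i, i < n -> F i = 0.
Proof.
  induction n as [|n IH]; simpl.
  - split; intros; lia.
  - rewrite Nat.eq_add_0, IH. split.
    + intros [H1 H2] i Hi. destruct (Nat.eq_dec i n) as [->|]; [exact H2|]. apply H1. lia.
    + intros H. split; [intros i Hi|]; apply H; lia.
Qed.

Lemma computable_sum_below m F X :
  computable (S m) F -> computable m X ->
  computable m (fun v => sum_below (X v) (fun i => F (i :: v))).
Proof.
  intros HF HX.
  apply (computable_rec m (fun k v => sum_below k (fun i => F (i :: v))) (fun _ => 0)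
           (fun w => nth 1 w 0 + F (nth 0 w 0 :: skipn 2 w))); try reflexivity.
  - apply computable_const.
  - apply computable_add; [apply computable_proj; lia|].
    apply (computable_comp_skipn 2 m F [fun w => nth 0 w 0]); [exact HF|].
    repeat constructor. apply computable_proj. lia.
  - exact HX.
Qed.

(** * Evaluation with bounded minimisation *)

(* Search state of a minimisation: [1] while searching, [S (S y)] once [y] is
   found, [0] once a candidate has no value yet within the bound. *)
Definition mu_step (r i : nat) : nat :=
  if r =? 0 then 0 else if r =? 1 then S (S i) else 1.

Definition mu_search (r : nat -> nat) (n : nat) : nat :=
  nat_rect (fun _ => nat) 1 (fun i st => if st =? 1 then mu_step (r i) i else st) n.

(* Evaluation with every minimisation cut off after [s] candidates;
   [0] means "no value yet" and [S y] means "value [y]". *)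
Fixpoint eval_upto (c : prf) (s : nat) (v : list nat) {struct c} : nat :=
  match c with
  | PZero => 1
  | PSucc => match v with [] => 0 | x :: _ => S (S x) end
  | PProj i => if i <? length v then S (nth i v 0) else 0
  | PComp f gs =>
      let rs := map (fun g => eval_upto g s v) gs in
      if fold_right Nat.mul 1 rs =? 0 then 0 else eval_upto f s (map pred rs)
  | PPrec f g =>
      match v with
      | [] => 0
      | n :: v' => nat_rect (fun _ => nat) (eval_upto f s v')
                     (fun k y => if y =? 0 then 0 else eval_upto g s (k :: pred y :: v')) n
      end
  | PMu f => pred (mu_search (fun i => eval_upto f s (i :: v)) s)
  end.

Lemma mu_search_succ r n :
  mu_search r (S n) = if mu_search r n =? 1 then mu_step (r n) n else mu_search r n.
Proof. reflexivity. Qed.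

Lemma mu_search_stay r n n' : mu_search r n <> 1 -> n <= n' -> mu_search r n' = mu_search r n.
Proof.
  intros Hn Hle. induction Hle as [|n' _ IH]; [reflexivity|].
  rewrite mu_search_succ, IH. destruct (Nat.eqb_spec (mu_search r n) 1); [lia|reflexivity].
Qed.

Lemma mu_search_mono r r' n : (forall i y, r i = S y -> r' i = S y) ->
  mu_search r n <> 0 -> mu_search r' n = mu_search r n.
Proof.
  intros Hr. induction n as [|n IH]; [reflexivity|]. rewrite !mu_search_succ.
  destruct (Nat.eqb_spec (mu_search r n) 1) as [E|E]; intros Hn.
  - rewrite IH, E by lia. unfold mu_step in *.
    destruct (r n) as [|y] eqn:Er; [contradiction|]. rewrite (Hr _ _ Er). reflexivity.
  - rewrite IH by exact Hn. destruct (Nat.eqb_spec (mu_search r n) 1); [lia|reflexivity].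
Qed.

Lemma mu_search_sound f v r n y : (forall i y, r i = S y -> eval f (i :: v) y) ->
  mu_search r n = S (S y) -> eval (PMu f) v y.
Proof.
  intros Hr.
  enough (Inv : (mu_search r n = 1 -> forall z, z < n -> exists k, eval f (z :: v) (S k)) /\
                (forall y, mu_search r n = S (S y) -> eval (PMu f) v y)) by apply Inv.
  induction n as [|n [IH1 IH2]]; [split; intros; simpl in *; lia|].
  rewrite mu_search_succ. destruct (Nat.eqb_spec (mu_search r n) 1) as [E|E]; [|split; auto; lia].
  unfold mu_step. destruct (r n) as [|[|k]] eqn:Er; simpl.
  - split; intros; discriminate.
  - split; [lia|]. intros y' Ey. injection Ey as <-.
    constructor; [exact (Hr _ _ Er)|exact (IH1 E)].
  - split; [|discriminate]. intros _ z Hz.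
    destruct (Nat.eq_dec z n) as [->|]; [exists k; exact (Hr _ _ Er)|]. apply IH1; [exact E|lia].
Qed.

Lemma mu_search_found r n y : (forall z, z < y -> exists k, r z = S (S k)) -> r y = 1 ->
  y < n -> mu_search r n = S (S y).
Proof.
  intros Hlt Hy Hn.
  assert (Hsearch : forall i, i <= y -> mu_search r i = 1).
  { induction i as [|i IH]; intros Hi; [reflexivity|].
    rewrite mu_search_succ, IH by lia. destruct (Hlt i ltac:(lia)) as [k ->]. reflexivity. }
  assert (Hfound : mu_search r (S y) = S (S y)).
  { rewrite mu_search_succ, Hsearch, Hy by lia. reflexivity. }
  rewrite <- Hfound. apply mu_search_stay; [rewrite Hfound|]; lia.
Qed.

Lemma map_eval_upto_mono gs s s' v :
  Forall (fun g => forall s s' v y, eval_upto g s v = S y -> s <= s' -> eval_upto g s' v = S y) gs ->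
  s <= s' -> fold_right Nat.mul 1 (map (fun g => eval_upto g s v) gs) <> 0 ->
  map (fun g => eval_upto g s' v) gs = map (fun g => eval_upto g s v) gs.
Proof.
  induction 1 as [|g gs Hg _ IH]; intros Hs Hp; simpl in *; [reflexivity|].
  apply Nat.neq_mul_0 in Hp as [Hp1 Hp2].
  destruct (eval_upto g s v) eqn:E; [contradiction|]. f_equal; eauto.
Qed.

Lemma eval_upto_mono c s s' v y : eval_upto c s v = S y -> s <= s' -> eval_upto c s' v = S y.
Proof.
  revert s s' v y.
  induction c as [| |i|f gs IHf IHgs|f g IHf IHg|f IHf] using prf_nested_ind;
    intros s s' v y H Hs; simpl in *; auto.
  - destruct (Nat.eqb_spec (fold_right Nat.mul 1 (map (fun g => eval_upto g s v) gs)) 0) as [|Hp];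
      [discriminate|].
    rewrite (map_eval_upto_mono gs s s' v IHgs Hs Hp).
    destruct (Nat.eqb_spec (fold_right Nat.mul 1 (map (fun g => eval_upto g s v) gs)) 0);
      [contradiction|eauto].
  - destruct v as [|n v]; [exact H|].
    revert y H. induction n as [|n IHn]; simpl; intros y H; [eauto|].
    destruct (nat_rect _ (eval_upto f s v) _ n) as [|y0] eqn:E; [discriminate|].
    rewrite (IHn y0 eq_refl). simpl in *. eauto.
  - assert (Hmono : mu_search (fun i => eval_upto f s' (i :: v)) s = S (S y)).
    { rewrite (mu_search_mono (fun i => eval_upto f s (i :: v))); [lia| |lia].
      intros i y'. eauto. }
    rewrite (mu_search_stay _ s s'), Hmono; [reflexivity|lia|exact Hs].
Qed.

Lemma eval_upto_sound c s v y : eval_upto c s v = S y -> eval c v y.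
Proof.
  revert s v y.
  induction c as [| |i|f gs IHf IHgs|f g IHf IHg|f IHf] using prf_nested_ind;
    intros s v y H; simpl in H.
  - injection H as <-. constructor.
  - destruct v as [|x v]; [discriminate|]. injection H as <-. constructor.
  - destruct (Nat.ltb_spec i (length v)); [|discriminate]. injection H as <-. constructor. lia.
  - destruct (Nat.eqb_spec (fold_right Nat.mul 1 (map (fun g => eval_upto g s v) gs)) 0) as [|Hp];
      [discriminate|].
    econstructor; [|exact (IHf _ _ _ H)]. clear H IHf.
    induction IHgs as [|g gs Hg _ IH]; simpl in *; constructor.
    + apply Nat.neq_mul_0 in Hp as [Hp _].
      destruct (eval_upto g s v) eqn:E; [contradiction|]. exact (Hg _ _ _ E).
    + apply Nat.neq_mul_0 in Hp as [_ Hp]. exact (IH Hp).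
  - destruct v as [|n v]; [discriminate|].
    revert y H. induction n as [|n IHn]; simpl; intros y H; [constructor; eauto|].
    destruct (nat_rect _ (eval_upto f s v) _ n) as [|y0] eqn:E; [discriminate|].
    simpl in H. econstructor; [exact (IHn _ eq_refl)|]. eauto.
  - apply (mu_search_sound f v (fun i => eval_upto f s (i :: v)) s y (fun i => IHf s (i :: v))).
    destruct (mu_search _ s) as [|[|]]; simpl in H; congruence.
Qed.

Lemma map_eval_upto_complete gs v ws :
  Forall (fun g => forall v y, eval g v y -> exists s, eval_upto g s v = S y) gs ->
  evals gs v ws ->
  exists s0, forall s, s0 <= s -> map (fun g => eval_upto g s v) gs = map S ws.
Proof.
  intros Hgs. revert ws. induction Hgs as [|g gs Hg _ IH]; intros ws E.
  - inversion E. exists 0. reflexivity.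
  - inversion E as [|? ? ? w ws' Ew Ews]; subst.
    destruct (Hg _ _ Ew) as [sa Ha]. destruct (IH _ Ews) as [sb Hb].
    exists (max sa sb). intros s Hs. simpl.
    rewrite Hb, (eval_upto_mono _ _ _ _ _ Ha) by lia. reflexivity.
Qed.

Lemma eval_upto_complete_below f v y :
  (forall v y, eval f v y -> exists s, eval_upto f s v = S y) ->
  (forall z, z < y -> exists k, eval f (z :: v) (S k)) ->
  exists s1, forall s, s1 <= s -> forall z, z < y -> exists k, eval_upto f s (z :: v) = S (S k).
Proof.
  intros Hf Hlt. induction y as [|y IHy]; [exists 0; intros; lia|].
  destruct IHy as [sa Ha]; [intros z Hz; apply Hlt; lia|].
  destruct (Hlt y ltac:(lia)) as [k Hk]. destruct (Hf _ _ Hk) as [sb Hb].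
  exists (max sa sb). intros s Hs z Hz.
  destruct (Nat.eq_dec z y) as [->|]; [exists k; eapply eval_upto_mono; [exact Hb|lia]|].
  apply Ha; lia.
Qed.

Lemma eval_upto_complete c v y : eval c v y -> exists s, eval_upto c s v = S y.
Proof.
  revert v y.
  induction c as [| |i|f gs IHf IHgs|f g IHf IHg|f IHf] using prf_nested_ind;
    intros v y H.
  - inversion H. exists 0. reflexivity.
  - inversion H. exists 0. reflexivity.
  - inversion H as [| |? ? Hl| | | | ]; subst. exists 0. simpl.
    destruct (Nat.ltb_spec i (length v)); [reflexivity|lia].
  - inversion H as [| | |? ? ? ws ? E F| | | ]; subst.
    destruct (IHf _ _ F) as [s1 Hs1].
    destruct (map_eval_upto_complete gs v ws IHgs E) as [s0 Hs0].
    exists (max s0 s1). simpl. rewrite Hs0 by lia.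
    assert (Hp : fold_right Nat.mul 1 (map S ws) <> 0).
    { clear. induction ws as [|w ws IH]; cbn [map fold_right]; [discriminate|].
      apply Nat.neq_mul_0. split; [discriminate|exact IH]. }
    destruct (Nat.eqb_spec (fold_right Nat.mul 1 (map S ws)) 0); [contradiction|].
    rewrite map_map, map_id. eapply eval_upto_mono; [exact Hs1|lia].
  - destruct v as [|n v]; [inversion H|].
    revert y H. induction n as [|n IHn]; intros y H; inversion H; subst.
    + match goal with A : eval f v y |- _ => destruct (IHf _ _ A) as [s Hs] end.
      exists s. exact Hs.
    + match goal with
      | A : eval (PPrec f g) (n :: v) ?y0, B : eval g _ _ |- _ =>
          destruct (IHn _ A) as [s1 Hs1]; destruct (IHg _ _ B) as [s2 Hs2]
      end.
      exists (max s1 s2).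
      pose proof (eval_upto_mono _ _ (max s1 s2) _ _ Hs1 ltac:(lia)) as M.
      simpl in M |- *. rewrite M. simpl.
      eapply eval_upto_mono; [exact Hs2|lia].
  - inversion H as [| | | | | |? ? ? Hy Hlt]; subst.
    destruct (IHf _ _ Hy) as [s0 Hs0].
    destruct (eval_upto_complete_below f v y IHf Hlt) as [s1 Hs1].
    exists (max (S y) (max s0 s1)). set (s := max (S y) (max s0 s1)). simpl.
    rewrite (mu_search_found _ _ y); [reflexivity| |eapply eval_upto_mono; [exact Hs0|lia]|lia].
    apply Hs1. lia.
Qed.

Lemma computable_mu_step m R I : computable m R -> computable m I ->
  computable m (fun v => mu_step (R v) (I v)).
Proof.
  intros HR HI. unfold mu_step.
  apply computable_ifz; [exact HR|apply computable_const|].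
  apply computable_ifeq; try apply computable_const; [exact HR|].
  apply computable_succ, computable_succ, HI.
Qed.

Lemma computable_mu_search m R X :
  computable (S m) (fun w => R (hd 0 w) (tl w)) -> computable m X ->
  computable m (fun v => mu_search (fun i => R i v) (X v)).
Proof.
  intros HR HX.
  apply (computable_rec m (fun n v => mu_search (fun i => R i v) n) (fun _ => 1)
           (fun u => if nth 1 u 0 =? 1 then mu_step (R (nth 0 u 0) (skipn 2 u)) (nth 0 u 0)
                     else nth 1 u 0));
    [apply computable_const| |reflexivity|reflexivity|exact HX].
  apply computable_ifeq; try apply computable_proj; try apply computable_const; try lia.
  apply computable_mu_step; [|apply computable_proj; lia].
  apply (computable_comp_skipn 2 m (fun w => R (hd 0 w) (tl w)) [fun u => nth 0 u 0]); [exact HR|].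
  repeat constructor. apply computable_proj. lia.
Qed.

Definition upto_computable (c : prf) : Prop :=
  forall m, computable (S m) (fun w => eval_upto c (hd 0 w) (tl w)).

Lemma upto_computable_comp f gs :
  upto_computable f -> Forall upto_computable gs -> upto_computable (PComp f gs).
Proof.
  intros Hf Hgs m.
  assert (Hprod : computable (S m) (fun w =>
            fold_right Nat.mul 1 (map (fun g => eval_upto g (hd 0 w) (tl w)) gs))).
  { induction Hgs as [|g gs Hg _ IH]; simpl; [apply computable_const|apply computable_mul; auto]. }
  assert (Hval : computable (S m) (fun w =>
            eval_upto f (hd 0 w) (map pred (map (fun g => eval_upto g (hd 0 w) (tl w)) gs)))).
  { eapply computable_ext.
    - apply (computable_comp (S m) (fun w => eval_upto f (hd 0 w) (tl w))
               ((fun w => nth 0 w 0) :: map (fun g w => pred (eval_upto g (hd 0 w) (tl w))) gs)).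
      + simpl. rewrite length_map. apply Hf.
      + constructor; [apply computable_proj; lia|].
        clear Hprod. induction Hgs; simpl; constructor; [apply computable_pred|]; auto.
    - intros [|s v] Hv; simpl in Hv; [lia|]. simpl. rewrite !map_map. reflexivity. }
  eapply computable_ext; [apply computable_ifz; [exact Hprod|apply computable_const|exact Hval]|].
  reflexivity.
Qed.

Lemma upto_computable_prec f g :
  upto_computable f -> upto_computable g -> upto_computable (PPrec f g).
Proof.
  intros Hf Hg [|m].
  - apply computable_ext with (fun _ => 0); [apply computable_const|].
    intros [|s [|n v]] Hv; simpl in Hv; try lia. reflexivity.
  - set (h := fun k w => nat_rect (fun _ => nat) (eval_upto f (nth 0 w 0) (skipn 2 w))
                (fun k y => if y =? 0 then 0
                            else eval_upto g (nth 0 w 0) (k :: pred y :: skipn 2 w)) k).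
    eapply computable_ext.
    + apply (computable_rec _ h (fun w => eval_upto f (nth 0 w 0) (skipn 2 w)) (fun u => if nth 1 u 0 =? 0 then 0 else
                 eval_upto g (nth 2 u 0) (nth 0 u 0 :: pred (nth 1 u 0) :: skipn 4 u))
               (fun w => nth 1 w 0)); try reflexivity.
      * apply (computable_comp_skipn 2 m (fun w => eval_upto f (hd 0 w) (tl w))
                 [fun w => nth 0 w 0]); [apply Hf|].
        repeat constructor. apply computable_proj. lia.
      * apply computable_ifz; [apply computable_proj; lia|apply computable_const|].
        apply (computable_comp_skipn 4 m (fun w => eval_upto g (hd 0 w) (tl w))
                 [fun u => nth 2 u 0; fun u => nth 0 u 0; fun u => pred (nth 1 u 0)]);
          [apply Hg|].
        repeat constructor; try apply computable_pred; apply computable_proj; lia.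
      * apply computable_proj. lia.
    + intros [|s [|n v]] Hv; simpl in Hv; try lia. reflexivity.
Qed.

Lemma upto_computable_mu f : upto_computable f -> upto_computable (PMu f).
Proof.
  intros Hf m.
  eapply computable_ext.
  - apply computable_pred,
      (computable_mu_search (S m) (fun i w => eval_upto f (nth 0 w 0) (i :: tl w))
                             (fun w => nth 0 w 0)).
    + eapply computable_ext.
      * apply (computable_comp_skipn 2 m (fun w => eval_upto f (hd 0 w) (tl w))
                 [fun u => nth 1 u 0; fun u => nth 0 u 0]); [apply Hf|].
        repeat constructor; apply computable_proj; lia.
      * intros [|a [|b u]] Hu; simpl in Hu; try lia. reflexivity.
    + apply computable_proj. lia.
  - intros [|s v] Hv; simpl in Hv; [lia|]. reflexivity.
Qed.

Lemma computable_eval_upto c m : computable (S m) (fun w => eval_upto c (hd 0 w) (tl w)).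
Proof.
  revert m. change (upto_computable c).
  induction c as [| |i|f gs IHf IHgs|f g IHf IHg|f IHf] using prf_nested_ind.
  - intros m. apply (computable_const _ 1).
  - intros [|m].
    + apply computable_ext with (fun _ => 0); [apply computable_const|].
      intros [|s [|x v]] Hv; simpl in Hv; try lia. reflexivity.
    + apply computable_ext with (fun w => S (S (nth 1 w 0))).
      * apply computable_succ, computable_succ, computable_proj. lia.
      * intros [|s [|x v]] Hv; simpl in Hv; try lia. reflexivity.
  - intros m. destruct (Nat.ltb_spec i m) as [Hi|Hi].
    + apply computable_ext with (fun w => S (nth (S i) w 0)).
      * apply computable_succ, computable_proj. lia.
      * intros [|s v] Hv; simpl in Hv; [lia|]. simpl.
        destruct (Nat.ltb_spec i (length v)); [reflexivity|lia].
    + apply computable_ext with (fun _ => 0); [apply computable_const|].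
      intros [|s v] Hv; simpl in Hv; [lia|]. simpl.
      destruct (Nat.ltb_spec i (length v)); [lia|reflexivity].
  - apply upto_computable_comp; assumption.
  - apply upto_computable_prec; assumption.
  - apply upto_computable_mu; assumption.
Qed.

(** * Recursive and computably enumerable relations *)

Definition recursive (m : nat) (Q : list nat -> Prop) : Prop :=
  exists P, computable m P /\ forall v, length v = m -> (Q v <-> P v = 0).

Lemma recursive_ext m Q Q' :
  recursive m Q -> (forall v, length v = m -> (Q v <-> Q' v)) -> recursive m Q'.
Proof.
  intros [P [HP HQ]] E. exists P. split; [exact HP|]. intros v Hv. rewrite <- E, HQ; tauto.
Qed.

Lemma recursive_le m X Y : computable m X -> computable m Y -> recursive m (fun v => X v <= Y v).
Proof.
  intros HX HY. exists (fun v => X v - Y v). split; [apply computable_sub; assumption|lia].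
Qed.

Lemma recursive_eq m X Y : computable m X -> computable m Y -> recursive m (fun v => X v = Y v).
Proof.
  intros HX HY. exists (fun v => (X v - Y v) + (Y v - X v)).
  split; [apply computable_add; apply computable_sub; assumption|lia].
Qed.

Lemma recursive_testbit m X Y : computable m X -> computable m Y ->
  recursive m (fun v => Nat.testbit (X v) (Y v) = true).
Proof.
  intros HX HY. exists (fun v => 1 - Nat.b2n (Nat.testbit (X v) (Y v))).
  split; [apply computable_sub; [apply computable_const|apply computable_testbit; assumption]|].
  intros v _. destruct (Nat.testbit (X v) (Y v)); simpl; split; congruence.
Qed.

Lemma recursive_not m Q : recursive m Q -> recursive m (fun v => ~ Q v).
Proof.
  intros [P [HP HQ]]. exists (fun v => if P v =? 0 then 1 else 0).
  split; [apply computable_ifz; [exact HP|apply computable_const|apply computable_const]|].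
  intros v Hv. rewrite HQ by exact Hv. destruct (Nat.eqb_spec (P v) 0); split; congruence.
Qed.

Lemma recursive_and m Q1 Q2 : recursive m Q1 -> recursive m Q2 ->
  recursive m (fun v => Q1 v /\ Q2 v).
Proof.
  intros [P1 [HP1 HQ1]] [P2 [HP2 HQ2]]. exists (fun v => P1 v + P2 v).
  split; [apply computable_add; assumption|]. intros v Hv. rewrite HQ1, HQ2 by exact Hv. lia.
Qed.

Lemma recursive_impl m Q1 Q2 : recursive m Q1 -> recursive m Q2 ->
  recursive m (fun v => Q1 v -> Q2 v).
Proof.
  intros [P1 [HP1 HQ1]] [P2 [HP2 HQ2]]. exists (fun v => if P1 v =? 0 then P2 v else 0).
  split; [apply computable_ifz; [exact HP1|exact HP2|apply computable_const]|].
  intros v Hv. rewrite HQ1, HQ2 by exact Hv. destruct (Nat.eqb_spec (P1 v) 0); tauto.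
Qed.

Lemma recursive_bforall m Q X : recursive (S m) Q -> computable m X ->
  recursive m (fun v => forall i, i < X v -> Q (i :: v)).
Proof.
  intros [P [HP HQ]] HX. exists (fun v => sum_below (X v) (fun i => P (i :: v))).
  split; [apply computable_sum_below; assumption|].
  intros v Hv. rewrite sum_below_eq_0.
  split; intros H i Hi; apply HQ; [simpl; lia| |simpl; lia|]; apply H, Hi.
Qed.

Lemma recursive_bexists m Q X : recursive (S m) Q -> computable m X ->
  recursive m (fun v => exists i, i < X v /\ Q (i :: v)).
Proof.
  intros HQ HX.
  eapply recursive_ext; [apply recursive_not, recursive_bforall; [apply recursive_not, HQ|exact HX]|].
  intros v _. split.
  - intros H. apply NNPP. intros Hn. apply H. intros i Hi HQi. apply Hn. eauto.
  - intros [i [Hi HQi]] H. exact (H i Hi HQi).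
Qed.

Lemma recursive_forall_imp m P Q X :
  recursive (S m) P -> recursive (S m) Q -> computable m X ->
  (forall v i, length v = m -> P (i :: v) -> i < X v) ->
  recursive m (fun v => forall i, P (i :: v) -> Q (i :: v)).
Proof.
  intros HP HQ HX Hbound.
  eapply recursive_ext; [apply recursive_bforall; [apply recursive_impl; [exact HP|exact HQ]|exact HX]|].
  intros v Hv. split; intros H i; [intros HPi; exact (H i (Hbound v i Hv HPi) HPi)|auto].
Qed.

Definition ce (m : nat) (R : list nat -> Prop) : Prop :=
  exists c, forall v, length v = m -> (R v <-> exists y, eval c v y).

Lemma ce_ext m R R' : ce m R -> (forall v, length v = m -> (R v <-> R' v)) -> ce m R'.
Proof. intros [c Hc] E. exists c. intros v Hv. rewrite <- E by exact Hv. auto. Qed.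

Lemma ce2_iff R : ce2 R <-> ce 2 (fun v => R (nth 0 v 0) (nth 1 v 0)).
Proof.
  split; intros [c Hc]; exists c.
  - intros [|a [|b [|]]] Hv; simpl in Hv; try lia. apply Hc.
  - intros a b. exact (Hc [a; b] eq_refl).
Qed.

Lemma least_witness (Q : nat -> Prop) n : Q n -> exists n', Q n' /\ forall z, z < n' -> ~ Q z.
Proof.
  induction n as [n IH] using lt_wf_ind. intros Hn.
  destruct (classic (exists z, z < n /\ Q z)) as [[z [Hz HQz]]|Hno].
  - exact (IH z Hz HQz).
  - exists n. split; [exact Hn|]. intros z Hz HQz. apply Hno. eauto.
Qed.

Lemma ce_exists_recursive m Q : recursive (S m) Q -> ce m (fun v => exists s, Q (s :: v)).
Proof.
  intros [P [[cp Hcp] HQ]]. exists (PMu cp). intros v Hv.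
  assert (Hlen : forall s, length (s :: v) = S m) by (intros; simpl; lia).
  split.
  - intros [s Hs]. destruct (least_witness (fun s => Q (s :: v)) s Hs) as [s' [Hs' Hmin]].
    exists s'. constructor.
    + apply HQ in Hs'; [|apply Hlen]. rewrite <- Hs'. apply Hcp, Hlen.
    + intros z Hz. destruct (P (z :: v)) as [|k] eqn:E.
      * exfalso. apply (Hmin z Hz). apply HQ; [apply Hlen|exact E].
      * exists k. rewrite <- E. apply Hcp, Hlen.
  - intros [y Hy]. inversion Hy as [| | | | | |? ? ? Hzero _]; subst. exists y.
    apply HQ; [apply Hlen|]. exact (eval_det _ _ _ _ (Hcp _ (Hlen y)) Hzero).
Qed.

Lemma ce_of_recursive m Q : recursive m Q -> ce m Q.
Proof.
  intros [P [HP HQ]].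
  eapply ce_ext; [apply (ce_exists_recursive m (fun w => Q (tl w)))|].
  - exists (fun w => P (tl w)). split.
    + apply (computable_comp_skipn 1 m P []). exact HP. constructor.
    + intros [|s v] Hv; simpl in Hv; [lia|]. apply (HQ v). lia.
  - intros v _. simpl. split; [intros [_ H]; exact H|exists 0; exact H].
Qed.

Lemma ce_and m R1 R2 : ce m R1 -> ce m R2 -> ce m (fun v => R1 v /\ R2 v).
Proof.
  intros [c1 H1] [c2 H2]. exists (PComp PZero [c1; c2]). intros v Hv.
  rewrite H1, H2 by exact Hv. split.
  - intros [[y1 E1] [y2 E2]]. exists 0. econstructor; [repeat econstructor; eassumption|constructor].
  - intros [y Hy]. inversion Hy as [| | |? ? ? ws ? E _| | | ]; subst.
    inversion E as [|? ? ? w1 ? E1 Es]; subst. inversion Es as [|? ? ? w2 ? E2 _]; subst.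
    split; eexists; eassumption.
Qed.

Lemma ce_comp m R Gs : ce (length Gs) R -> Forall (computable m) Gs ->
  ce m (fun v => R (map (fun G => G v) Gs)).
Proof.
  intros [c Hc] HG. destruct (computable_codes _ _ HG) as [cs Hcs].
  exists (PComp c cs). intros v Hv. rewrite Hc by apply length_map. split.
  - intros [y Hy]. exists y. econstructor; [apply Hcs, Hv|exact Hy].
  - intros [y Hy]. inversion Hy as [| | |? ? ? ws ? E F| | | ]; subst.
    rewrite (evals_det _ _ _ _ E (Hcs v eq_refl)) in F. eauto.
Qed.

Lemma ce_exists m R : ce (S m) R -> ce m (fun v => exists k, R (k :: v)).
Proof.
  intros [c Hc].
  eapply ce_ext; [apply (ce_exists_recursive m (fun w =>
      exists k, k < S (nth 0 w 0) /\ eval_upto c (nth 0 w 0) (k :: skipn 1 w) <> 0))|].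
  - apply (recursive_bexists (S m) (fun u => eval_upto c (nth 1 u 0) (nth 0 u 0 :: skipn 2 u) <> 0)
             (fun w => S (nth 0 w 0))).
    + apply recursive_not, recursive_eq; [|apply computable_const].
      apply (computable_comp_skipn 2 m (fun w => eval_upto c (hd 0 w) (tl w))
               [fun u => nth 1 u 0; fun u => nth 0 u 0]); [apply computable_eval_upto|].
      repeat constructor; apply computable_proj; lia.
    + apply computable_succ, computable_proj. lia.
  - intros v Hv. simpl. split.
    + intros [s [k [_ Hk]]]. exists k. apply Hc; [simpl; lia|].
      destruct (eval_upto c s (k :: v)) as [|y] eqn:E; [contradiction|].
      exists y. exact (eval_upto_sound _ _ _ _ E).
    + intros [k Hk]. apply Hc in Hk as [y Hy]; [|simpl; lia].
      destruct (eval_upto_complete _ _ _ Hy) as [s0 Hs0].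
      exists (max s0 k), k. split; [lia|].
      rewrite (eval_upto_mono _ _ _ _ _ Hs0) by lia. discriminate.
Qed.

Lemma ce2_exists_pair (R : nat -> nat -> Prop) (Q : list nat -> Prop) :
  ce2 R -> recursive 4 Q -> ce2 (fun a b => exists k1 k2, Q [k1; k2; a; b] /\ R k1 k2).
Proof.
  intros HR HQ. apply ce2_iff.
  assert (H4 : ce 4 (fun v => Q v /\ R (nth 0 v 0) (nth 1 v 0))).
  { apply ce_and; [apply ce_of_recursive, HQ|].
    apply (ce_comp 4 (fun v => R (nth 0 v 0) (nth 1 v 0)) [fun v => nth 0 v 0; fun v => nth 1 v 0]).
    - apply ce2_iff, HR.
    - repeat constructor; apply computable_proj; lia. }
  apply ce_exists, ce_exists in H4.
  eapply ce_ext; [exact H4|]. intros [|a [|b [|]]] Hv; simpl in Hv; try lia. simpl.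
  split; intros [k [l H]]; exists l, k; exact H.
Qed.

Lemma ce2_ext (R R' : nat -> nat -> Prop) :
  ce2 R -> (forall a b, R a b <-> R' a b) -> ce2 R'.
Proof. intros [c Hc] E. exists c. intros a b. rewrite <- E. apply Hc. Qed.

(** * Strings and the two operators *)

Definition str_one (n i : nat) : Prop := i < Nat.log2 n /\ Nat.testbit n i = true.

Lemma testbit_true_lt a i : Nat.testbit a i = true -> i < a.
Proof.
  intros H. destruct (Nat.lt_ge_cases i a) as [|Hle]; [assumption|].
  destruct a as [|a]; [rewrite Nat.bits_0 in H; discriminate|].
  rewrite Nat.bits_above_log2 in H; [discriminate|].
  pose proof (Nat.log2_lt_lin (S a)). lia.
Qed.

Lemma str_one_lt n i : str_one n i -> i < n.
Proof. intros [_ H]. exact (testbit_true_lt n i H). Qed.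

Lemma lt_log2_iff i n : i < Nat.log2 n <-> 2 ^ S i <= n.
Proof.
  destruct n as [|n].
  - change (Nat.log2 0) with 0. split; [lia|].
    pose proof (Nat.pow_nonzero 2 (S i) ltac:(lia)). lia.
  - rewrite Nat.log2_le_pow2 by lia. lia.
Qed.

Lemma recursive_str_one m N I : computable m N -> computable m I ->
  recursive m (fun v => str_one (N v) (I v)).
Proof.
  intros HN HI.
  apply recursive_ext with (fun v => 2 ^ S (I v) <= N v /\ Nat.testbit (N v) (I v) = true).
  - apply recursive_and; [apply recursive_le|apply recursive_testbit]; try assumption.
    apply computable_pow2, computable_succ, HI.
  - intros v _. unfold str_one. rewrite lt_log2_iff. reflexivity.
Qed.

Lemma init_seg_str_one n X i : init_seg n X -> str_one n i -> X i.
Proof. intros [_ Hseg] [Hi Hb]. apply Hseg; assumption. Qed.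

Lemma bits_prefix_exists (X : nat -> Prop) L : exists r,
  (forall i, i < L -> (Nat.testbit r i = true <-> X i)) /\
  (forall i, L <= i -> Nat.testbit r i = false).
Proof.
  induction L as [|L [r [Hlow Hhigh]]].
  - exists 0. split; [lia|intros; apply Nat.bits_0].
  - destruct (classic (X L)) as [HX|HX].
    + exists (Nat.setbit r L). split; intros i Hi.
      * destruct (Nat.eq_dec i L) as [->|Hne]; [rewrite Nat.setbit_eq; tauto|].
        rewrite Nat.setbit_neq by congruence. apply Hlow. lia.
      * rewrite Nat.setbit_neq by lia. apply Hhigh. lia.
    + exists r. split; intros i Hi; [|apply Hhigh; lia].
      destruct (Nat.eq_dec i L) as [->|Hne]; [rewrite Hhigh by lia; split; [discriminate|tauto]|].
      apply Hlow. lia.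
Qed.

Lemma init_seg_exists X L : exists n, init_seg n X /\ Nat.log2 n = L.
Proof.
  destruct (bits_prefix_exists X L) as [r [Hlow Hhigh]].
  assert (Hlog : Nat.log2 (Nat.setbit r L) = L).
  { apply Nat.log2_bits_unique; [apply Nat.setbit_eq|].
    intros i Hi. rewrite Nat.setbit_neq by lia. apply Hhigh. lia. }
  exists (Nat.setbit r L). split; [split|exact Hlog].
  - pose proof (testbit_true_lt _ _ (Nat.setbit_eq r L)). lia.
  - intros i Hi. rewrite Hlog in Hi. rewrite Nat.setbit_neq by lia. apply Hlow, Hi.
Qed.

Lemma canon_clearbit_log2 n i : canon (Nat.clearbit n (Nat.log2 n)) i <-> str_one n i.
Proof.
  unfold canon, str_one. destruct (Nat.eq_dec (Nat.log2 n) i) as [<-|Hne].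
  - rewrite Nat.clearbit_eq. split; [discriminate|lia].
  - rewrite Nat.clearbit_neq by exact Hne. split; [|tauto]. intros Hb. split; [|exact Hb].
    destruct (Nat.lt_ge_cases i (Nat.log2 n)) as [|Hle]; [assumption|].
    rewrite Nat.bits_above_log2 in Hb by lia. discriminate.
Qed.

Definition theta_of_psi (Psi : nat -> nat -> Prop) (n x : nat) : Prop :=
  exists e f, Psi e f /\ (forall i, canon e i -> str_one n i) /\ canon f x.

Definition psi_of_theta (Theta : nat -> nat -> Prop) (e f : nat) : Prop :=
  exists n x, Theta n x /\ 0 < n /\ (forall i, canon e i <-> str_one n i) /\ f = 2 ^ x.

Lemma ce2_theta_of_psi Psi : ce2 Psi -> ce2 (theta_of_psi Psi).
Proof.
  intros HPsi. eapply ce2_ext.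
  - apply (ce2_exists_pair Psi (fun v =>
      (forall i, canon (nth 0 v 0) i -> str_one (nth 2 v 0) i) /\ canon (nth 1 v 0) (nth 3 v 0)));
      [exact HPsi|].
    apply recursive_and; [|apply recursive_testbit; apply computable_proj; lia].
    apply (recursive_forall_imp 4 (fun u => canon (nth 1 u 0) (nth 0 u 0))
             (fun u => str_one (nth 3 u 0) (nth 0 u 0)) (fun v => nth 0 v 0)).
    + apply recursive_testbit; apply computable_proj; lia.
    + apply recursive_str_one; apply computable_proj; lia.
    + apply computable_proj. lia.
    + intros v i _. apply testbit_true_lt.
  - intros n x. unfold theta_of_psi. simpl. firstorder.
Qed.

Lemma ce2_psi_of_theta Theta : ce2 Theta -> ce2 (psi_of_theta Theta).
Proof.
  intros HTheta. eapply ce2_ext.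
  - apply (ce2_exists_pair Theta (fun v =>
      0 < nth 0 v 0 /\ (forall i, canon (nth 2 v 0) i -> str_one (nth 0 v 0) i) /\
      (forall i, str_one (nth 0 v 0) i -> canon (nth 2 v 0) i) /\ nth 3 v 0 = 2 ^ nth 1 v 0));
      [exact HTheta|].
    repeat apply recursive_and.
    + apply recursive_le; [apply computable_const|apply computable_proj; lia].
    + apply (recursive_forall_imp 4 (fun u => canon (nth 3 u 0) (nth 0 u 0))
               (fun u => str_one (nth 1 u 0) (nth 0 u 0)) (fun v => nth 2 v 0)).
      * apply recursive_testbit; apply computable_proj; lia.
      * apply recursive_str_one; apply computable_proj; lia.
      * apply computable_proj. lia.
      * intros v i _. apply testbit_true_lt.
    + apply (recursive_forall_imp 4 (fun u => str_one (nth 1 u 0) (nth 0 u 0))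
               (fun u => canon (nth 3 u 0) (nth 0 u 0)) (fun v => nth 0 v 0)).
      * apply recursive_str_one; apply computable_proj; lia.
      * apply recursive_testbit; apply computable_proj; lia.
      * apply computable_proj. lia.
      * intros v i _. apply str_one_lt.
    + apply recursive_eq; [|apply computable_pow2]; apply computable_proj; lia.
  - intros e f. unfold psi_of_theta. simpl. firstorder.
Qed.

Lemma rel_apply_theta_of_psi Psi X x : rel_apply (theta_of_psi Psi) X x <-> enum_apply Psi X x.
Proof.
  split.
  - intros [n [[e [f [HPsi [Hsub Hf]]]] Hseg]].
    exists e, f. split; [exact HPsi|]. split; [|exact Hf].
    intros i Hi. exact (init_seg_str_one n X i Hseg (Hsub i Hi)).
  - intros [e [f [HPsi [HE Hf]]]].
    destruct (init_seg_exists X e) as [n [[Hn Hseg] Hlog]].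
    exists n. split; [|split; assumption].
    exists e, f. split; [exact HPsi|]. split; [|exact Hf].
    intros i Hi. assert (Hlt : i < Nat.log2 n) by (rewrite Hlog; exact (testbit_true_lt e i Hi)).
    split; [exact Hlt|]. apply Hseg, HE; assumption.
Qed.

Lemma enum_apply_psi_of_theta Theta X x :
  enum_apply (psi_of_theta Theta) X x <->
  exists n, Theta n x /\ 0 < n /\ forall i, str_one n i -> X i.
Proof.
  split.
  - intros [e [f [[n [x' [HT [Hn [He ->]]]]] [HE Hx]]]].
    unfold canon in Hx. rewrite Nat.pow2_bits_eqb in Hx. apply Nat.eqb_eq in Hx. subst x'.
    exists n. split; [exact HT|]. split; [exact Hn|]. intros i Hi. apply HE, He, Hi.
  - intros [n [HT [Hn Hsub]]].
    exists (Nat.clearbit n (Nat.log2 n)), (2 ^ x). split; [|split].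
    + exists n, x. split; [exact HT|]. split; [exact Hn|].
      split; [apply canon_clearbit_log2|reflexivity].
    + intros i Hi. apply Hsub, canon_clearbit_log2, Hi.
    + apply Nat.pow2_bits_true.
Qed.

Lemma positive_part_suffices (Theta : nat -> nat -> Prop) (A B : nat -> Prop) :
  infinite B ->
  (forall C, infinite C -> (forall x, C x -> B x) -> forall x, rel_apply Theta C x <-> A x) ->
  forall C, infinite C -> (forall x, C x -> B x) ->
  forall x, (exists n, Theta n x /\ 0 < n /\ forall i, str_one n i -> C i) <-> A x.
Proof.
  intros hB HTheta C HC HCB x. split.
  - intros [n [HT [Hn Hsub]]].
    apply (HTheta (fun i => str_one n i \/ (Nat.log2 n <= i /\ B i))).
    + intros k. destruct (hB (max k (Nat.log2 n))) as [j [Hj HBj]].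
      exists j. split; [lia|]. right. split; [lia|exact HBj].
    + intros i [Hi|[_ Hi]]; [apply HCB, Hsub, Hi|exact Hi].
    + exists n. split; [exact HT|]. split; [exact Hn|].
      intros i Hi. split; [intros Hb; left; split; assumption|].
      intros [[_ Hb]|[Hle _]]; [exact Hb|lia].
  - intros HA. apply (HTheta C HC HCB x) in HA as [n [HT Hseg]].
    exists n. split; [exact HT|]. split; [exact (proj1 Hseg)|].
    intros i. apply init_seg_str_one, Hseg.
Qed.

Theorem proposition2p1 (A B : nat -> Prop) (hA : infinite A) (hB : infinite B) :
  (exists Psi : nat -> nat -> Prop, ce2 Psi /\
     forall C : nat -> Prop, infinite C -> (forall x, C x -> B x) ->
       forall x, enum_apply Psi C x <-> A x)
  <->
  (exists Theta : nat -> nat -> Prop, ce2 Theta /\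
     forall C : nat -> Prop, infinite C -> (forall x, C x -> B x) ->
       forall x, rel_apply Theta C x <-> A x).
Proof.
  split.
  - intros [Psi [HPsi HA]]. exists (theta_of_psi Psi).
    split; [exact (ce2_theta_of_psi Psi HPsi)|].
    intros C HC HCB x. rewrite rel_apply_theta_of_psi. exact (HA C HC HCB x).
  - intros [Theta [HTheta HA]]. exists (psi_of_theta Theta).
    split; [exact (ce2_psi_of_theta Theta HTheta)|].
    intros C HC HCB x. rewrite enum_apply_psi_of_theta.
    exact (positive_part_suffices Theta A B hB HA C HC HCB x).
Qed.
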